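(* Let $m\ge1$ be an integer. Then: (I) $\sup\{\min_{i\in[0:m]}G_i(\boldsymbol\beta): 0<\beta_1<\cdots<\beta_m<\infty\}=2+2\cos\left(\frac{2\pi}{2m+2}\right)$; (II) $\sup\{\min_{i\in[0:m]}G_i(\boldsymbol\beta): 0<\beta_1<\cdots<\beta_m=\infty\}=2+2\cos\left(\frac{2\pi}{2m+1}\right)$; (III) $\sup\{\min_{i\in[0:m]}G_i(\boldsymbol\beta): 0=\beta_1<\cdots<\beta_m<\infty\}=2+2\cos\left(\frac{2\pi}{2m+1}\right)$; (IV) if $m\ge2$, $\sup\{\min_{i\in[0:m]}G_i(\boldsymbol\beta): 0=\beta_1<\cdots<\beta_m=\infty\}=2+2\cos\left(\frac{2\pi}{2m}\right)$.
   Context: Variables $\beta_i$ take values in the extended half-line $[0,\infty]$ with the conventions $1/0=\infty$, $1/\infty=0$, $x+\infty=\infty$. For $\boldsymbol\beta=(\beta_1,\dots,\beta_m)$ define $G_0(\boldsymbol\beta)=1+\frac{1}{\beta_1}$, $G_i(\boldsymbol\beta)=2+\beta_i+\frac{1}{\beta_{i+1}}$ for $i\in[1:m-1]$, and $G_m(\boldsymbol\beta)=1+\beta_m$. (In the paper, $\sigma_{n,m}$ denotes these optimal values minus $2$.) *)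

From Stdlib Require Import Reals Lra Lia Arith.
Open Scope R_scope.

(* The extended half-line [0, oo] is modelled as R extended by +oo;
   all values that occur below are >= 0. *)
Inductive ER : Type := Fin (r : R) | PInf.

Definition ER_inv (x : ER) : ER :=
  match x with
  | Fin r => if Req_EM_T r 0 then PInf else Fin (/ r)
  | PInf => Fin 0
  end.

Definition ER_add (x y : ER) : ER :=
  match x, y with
  | Fin a, Fin b => Fin (a + b)
  | _, _ => PInf
  end.

Definition ER_le (x y : ER) : Prop :=
  match x, y with
  | Fin a, Fin b => a <= b
  | _, PInf => True
  | PInf, Fin _ => False
  end.

Definition ER_lt (x y : ER) : Prop := ER_le x y /\ x <> y.

Definition ER_min (x y : ER) : ER :=
  match x, y with
  | Fin a, Fin b => Fin (Rmin a b)
  | PInf, _ => y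
  | _, PInf => x
  end.

(* beta : nat -> ER, only beta 1, ..., beta m are relevant. *)
Definition G (m : nat) (beta : nat -> ER) (i : nat) : ER :=
  if Nat.eqb i 0 then ER_add (Fin 1) (ER_inv (beta 1%nat))
  else if Nat.ltb i m then
    ER_add (ER_add (Fin 2) (beta i)) (ER_inv (beta (S i)))
  else ER_add (Fin 1) (beta m).

Fixpoint minG (m : nat) (beta : nat -> ER) (k : nat) : ER :=
  match k with
  | O => G m beta 0
  | S k' => ER_min (minG m beta k') (G m beta k)
  end.

(* lo < beta_1 < ... < beta_m < hi, where "<" at an endpoint is replaced by
   "=" when the flag is true. *)
Definition chain (m : nat) (beta : nat -> ER)
  (lo_eq : bool) (hi_eq : bool) : Prop :=
  (if lo_eq then beta 1%nat = Fin 0 else ER_lt (Fin 0) (beta 1%nat)) /\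
  (forall i : nat, (1 <= i)%nat -> (i < m)%nat -> ER_lt (beta i) (beta (S i))) /\
  (if hi_eq then beta m = PInf else ER_lt (beta m) PInf).

Definition admissible_values (m : nat) (lo_eq hi_eq : bool) (x : ER) : Prop :=
  exists beta : nat -> ER, chain m beta lo_eq hi_eq /\ x = minG m beta m.

Definition ER_is_sup (S : ER -> Prop) (u : ER) : Prop :=
  (forall x, S x -> ER_le x u) /\
  (forall v, (forall x, S x -> ER_le x v) -> ER_le u v).

From Stdlib Require Import Reals Lra Lia Ratan.
Open Scope R_scope.

(* Put beta_0 = beta_(m+1) = -1, so that every G_i reads 2 + beta_i + 1/beta_(i+1).
   The finite entries then run from beta_a to beta_b, where a = 1 if beta_1 = 0
   (else a = 0) and b = m - 1 if beta_m = oo (else b = m); the denominator in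
   the four formulas is L = 2m + 2 - a - (m - b).
   If all G_i >= 2 + 2 cos th, the sine wave w_k = sin (k th + ph), which solves
   w_(k+2) = 2 cos th w_(k+1) - w_k, satisfies w_(k+1) beta_k <= w_k all along the
   chain (a discrete Sturm comparison); past the end of the chain this
   contradicts the positivity of w as long as th < 2 pi / L.  For th = 2 pi / L
   the ratios beta_j = w_j / w_(j+1) make every G_i equal to 2 + 2 cos th. *)

Definition wave (th ph : R) (k : nat) : R := sin (INR k * th + ph).

Lemma wave_neighbours th ph k :
  wave th ph (S (S k)) = sin ((INR (S k) * th + ph) + th) /\
  wave th ph k = sin ((INR (S k) * th + ph) - th).
Proof. unfold wave; split; f_equal; rewrite !S_INR; ring. Qed.

Lemma wave_rec th ph k :
  wave th ph (S (S k)) = 2 * cos th * wave th ph (S k) - wave th ph k.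
Proof.
  destruct (wave_neighbours th ph k) as [-> ->].
  unfold wave; rewrite sin_plus, sin_minus; ring.
Qed.

Lemma wave_cassini th ph k :
  wave th ph k * wave th ph (S (S k)) = wave th ph (S k) ^ 2 - sin th ^ 2.
Proof.
  destruct (wave_neighbours th ph k) as [-> ->].
  unfold wave; set (A := INR (S k) * th + ph).
  rewrite sin_plus, sin_minus.
  pose proof (sin2_cos2 A); pose proof (sin2_cos2 th); unfold Rsqr in *; nra.
Qed.

Lemma wave_ratio_lt th ph k : 0 < th < PI ->
  0 <= wave th ph k -> 0 < wave th ph (S k) -> 0 < wave th ph (S (S k)) ->
  wave th ph k / wave th ph (S k) < wave th ph (S k) / wave th ph (S (S k)).
Proof.
  intros Hth H0 H1 H2.
  assert (Hsin : 0 < sin th) by (apply sin_gt_0; lra).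
  pose proof (wave_cassini th ph k) as Hcas.
  apply Rlt_0_minus.
  replace (_ - _) with ((wave th ph (S k) ^ 2 - wave th ph k * wave th ph (S (S k)))
                        / (wave th ph (S k) * wave th ph (S (S k)))) by (field; lra).
  apply Rdiv_lt_0_compat; nra.
Qed.

Lemma exists_angle_of_cos T c : 0 < T < PI -> 2 + 2 * cos T < c < 4 ->
  exists th, 0 < th < T /\ c - 2 = 2 * cos th.
Proof.
  intros HT Hc.
  pose proof (COS_bound T) as [Hb1 Hb2].
  assert (Hr : -1 < (c - 2) / 2 < 1) by lra.
  exists (acos ((c - 2) / 2)).
  pose proof (acos_bound_lt _ Hr) as Ha.
  pose proof (cos_acos ((c - 2) / 2) ltac:(lra)) as Hca.
  split; [split; [lra|] | lra].
  apply cos_decreasing_0; lra.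
Qed.

Lemma riccati_step s w0 w1 w2 x z :
  w2 = s * w1 - w0 -> 0 < w1 -> w1 * x <= w0 -> s <= x + z -> w2 <= z * w1.
Proof. intros -> Hw1 Hx Hs. nra. Qed.

(* The invariant [w (S k) * x k <= w k] propagates along the chain; one more
   step through the end condition bounds [w (S (S b))]. *)
Lemma riccati_bound s y (w x : nat -> R) a b :
  (a <= b)%nat ->
  (forall k, w (S (S k)) = s * w (S k) - w k) ->
  (forall k, (a <= k <= b)%nat -> 0 < w (S k)) ->
  w (S a) * x a <= w a ->
  (forall k, (a <= k < b)%nat -> s <= x k + / x (S k) /\ 0 < x (S k)) ->
  s <= x b + y ->
  w (S (S b)) <= y * w (S b).
Proof.
  intros Hab Hrec Hpos Hstart Hstep Hend.
  assert (Hinv : forall n, (a + n <= b)%nat ->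
            w (S (a + n)) * x (a + n)%nat <= w (a + n)%nat).
  { induction n as [|n IH]; intros Hn.
    - rewrite Nat.add_0_r. exact Hstart.
    - rewrite <- plus_n_Sm.
      destruct (Hstep (a + n)%nat ltac:(lia)) as [Hs Hx].
      assert (Hw : w (S (S (a + n))) <= / x (S (a + n)) * w (S (a + n)))
        by (apply (riccati_step s (w (a + n)%nat) _ _ (x (a + n)%nat));
            auto; [apply Hpos; lia | apply IH; lia]).
      apply (Rmult_le_compat_r (x (S (a + n)))) in Hw; [|lra].
      replace (/ x (S (a + n)) * w (S (a + n)) * x (S (a + n)))
        with (w (S (a + n))) in Hw by (field; lra).
      exact Hw. }
  assert (Hb := Hinv (b - a)%nat ltac:(lia)).
  replace (a + (b - a))%nat with b in Hb by lia.
  exact (riccati_step _ _ _ _ _ _ (Hrec b) (Hpos b ltac:(lia)) Hb Hend).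
Qed.

(* [+oo] is read as [0]. *)
Definition ER_real (x : ER) : R := match x with Fin r => r | PInf => 0 end.

Lemma ER_lt_Fin r s : ER_lt (Fin r) (Fin s) <-> r < s.
Proof.
  unfold ER_lt; simpl; split.
  - intros [Hle Hne]. destruct (Req_dec r s) as [->|]; [congruence|lra].
  - intros H; split; [lra|intros E; injection E; lra].
Qed.

Lemma ER_lt_Fin_PInf r : ER_lt (Fin r) PInf.
Proof. split; [exact I|discriminate]. Qed.

Lemma ER_not_lt_PInf x : ~ ER_lt PInf x.
Proof. destruct x; unfold ER_lt; simpl; tauto. Qed.

Lemma ER_lt_finite x y : ER_lt x y -> x = Fin (ER_real x).
Proof.
  destruct x; [reflexivity|]. intros H. exfalso. exact (ER_not_lt_PInf y H).
Qed.

Lemma ER_lt_trans x y z : ER_lt x y -> ER_lt y z -> ER_lt x z.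
Proof.
  destruct x as [p|], y as [q|], z as [r|]; intros Hxy Hyz;
    try (exfalso; eapply ER_not_lt_PInf; eassumption); try apply ER_lt_Fin_PInf.
  apply ER_lt_Fin; apply ER_lt_Fin in Hxy, Hyz; lra.
Qed.

Lemma ER_le_trans x y z : ER_le x y -> ER_le y z -> ER_le x z.
Proof. destruct x, y, z; simpl; intros; try tauto; lra. Qed.

Lemma ER_inv_Fin r : r <> 0 -> ER_inv (Fin r) = Fin (/ r).
Proof. intros Hr. unfold ER_inv. destruct (Req_EM_T r 0); [contradiction|reflexivity]. Qed.

Lemma ER_le_Fin_min c x y :
  ER_le (Fin c) (ER_min x y) <-> ER_le (Fin c) x /\ ER_le (Fin c) y.
Proof.
  destruct x as [p|], y as [q|]; simpl; try tauto.
  split.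
  - intros H. pose proof (Rmin_l p q). pose proof (Rmin_r p q). lra.
  - intros [H1 H2]. apply Rmin_glb; lra.
Qed.

Lemma ER_le_Fin_minG m beta c k :
  ER_le (Fin c) (minG m beta k) <-> forall i, (i <= k)%nat -> ER_le (Fin c) (G m beta i).
Proof.
  induction k as [|k IH]; cbn [minG].
  - split; [intros H i Hi; replace i with 0%nat by lia; exact H | intros H; apply H; lia].
  - rewrite ER_le_Fin_min, IH. split.
    + intros [H1 H2] i Hi.
      destruct (Nat.eq_dec i (S k)) as [->|]; [exact H2 | apply H1; lia].
    + intros H; split; [intros i Hi; apply H; lia | apply H; lia].
Qed.

Lemma ER_le_Fin_of_gap t u X : t < u ->
  (forall c, t < c < u -> ER_le (Fin c) X -> False) -> ER_le X (Fin t).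
Proof.
  intros Htu H. destruct X as [r|]; simpl.
  - destruct (Rle_dec r t) as [|Hr]; [assumption|].
    exfalso. apply (H (Rmin r ((t + u) / 2))).
    + split; [apply Rmin_glb_lt; lra|]. pose proof (Rmin_r r ((t + u) / 2)). lra.
    + simpl. apply Rmin_l.
  - apply (H ((t + u) / 2)); simpl; [lra|exact I].
Qed.

Lemma admissible_is_sup m lo hi t : t < 4 ->
  (forall beta c, chain m beta lo hi -> t < c < 4 ->
     (forall i, (i <= m)%nat -> ER_le (Fin c) (G m beta i)) -> False) ->
  (exists beta, chain m beta lo hi /\
     forall i, (i <= m)%nat -> ER_le (Fin t) (G m beta i)) ->
  ER_is_sup (admissible_values m lo hi) (Fin t).
Proof.
  intros Ht Hgap [beta0 [Hc0 Ht0]]. split.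
  - intros x [beta [Hc ->]]. apply (ER_le_Fin_of_gap t 4); [lra|].
    intros c Hc' Hle. rewrite ER_le_Fin_minG in Hle. exact (Hgap beta c Hc Hc' Hle).
  - intros v Hv. apply ER_le_trans with (minG m beta0 m).
    + apply ER_le_Fin_minG, Ht0.
    + apply Hv. exists beta0. split; [exact Hc0 | reflexivity].
Qed.

Definition padded (m : nat) (beta : nat -> ER) (j : nat) : ER :=
  if orb (j =? 0) (j =? S m) then Fin (-1) else beta j.

Lemma padded_inner m beta j : (1 <= j <= m)%nat -> padded m beta j = beta j.
Proof.
  intros Hj. unfold padded.
  replace (j =? 0) with false by (symmetry; apply Nat.eqb_neq; lia).
  replace (j =? S m) with false by (symmetry; apply Nat.eqb_neq; lia).
  reflexivity.
Qed.

Lemma G_padded m beta i : (1 <= m)%nat -> (i <= m)%nat ->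
  G m beta i = ER_add (ER_add (Fin 2) (padded m beta i)) (ER_inv (padded m beta (S i))).
Proof.
  intros Hm Hi. unfold G.
  destruct (Nat.eqb_spec i 0) as [->|Hi0].
  - rewrite (padded_inner m beta 1) by lia. unfold padded; simpl.
    replace (2 + -1) with 1 by ring. reflexivity.
  - rewrite (padded_inner m beta i) by lia.
    destruct (Nat.ltb_spec i m) as [Him|Him].
    + rewrite (padded_inner m beta (S i)) by lia. reflexivity.
    + replace i with m by lia. unfold padded. rewrite Nat.eqb_refl, Bool.orb_true_r.
      rewrite ER_inv_Fin by lra.
      destruct (beta m); simpl; [f_equal; field | reflexivity].
Qed.

Lemma INR_b2n_bounds (c : bool) : 0 <= INR (Nat.b2n c) <= 1.
Proof. destruct c; simpl; lra. Qed.

Section Boundary.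

Variables (m : nat) (lo hi : bool).
Hypothesis Hm : (1 <= m)%nat.
Hypothesis Hlohi : (Nat.b2n lo + Nat.b2n hi <= m)%nat.

Local Notation a := (Nat.b2n lo).
Local Notation b := (m - Nat.b2n hi)%nat.

Definition span : R := 2 * INR m + 2 - INR (Nat.b2n lo) - INR (Nat.b2n hi).
Definition phase (th : R) : R := - (1 + INR (Nat.b2n lo)) * th / 2.
Definition tail : R := if hi then 0 else -1.

Lemma INR_chain_end : INR b = INR m - INR (Nat.b2n hi).
Proof. apply minus_INR. lia. Qed.

Lemma span_gt_2 : 2 < span.
Proof.
  assert (Hle : INR (a + Nat.b2n hi) <= INR m) by (apply le_INR; exact Hlohi).
  assert (H1 : 1 <= INR m) by (apply (le_INR 1); exact Hm).
  rewrite plus_INR in Hle. unfold span. lra.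
Qed.

Lemma optimal_angle_bounds : 0 < 2 * PI / span < PI.
Proof.
  pose proof span_gt_2. pose proof PI_RGT_0. split.
  - apply Rdiv_lt_0_compat; lra.
  - apply Rmult_lt_reg_r with span; [lra|].
    replace (2 * PI / span * span) with (2 * PI) by (field; lra). nra.
Qed.

Lemma optimal_angle_span : 2 * PI / span * span = 2 * PI.
Proof. pose proof span_gt_2. field. lra. Qed.

Lemma wave_angle th k : INR k * th + phase th = (2 * INR k - 1 - INR a) * th / 2.
Proof. unfold phase. field. Qed.

Lemma wave_pos_chain th k : 0 < th -> th * span <= 2 * PI -> (a <= k <= b)%nat ->
  0 < wave th (phase th) (S k).
Proof.
  intros Hth Hspan Hk. unfold wave. rewrite wave_angle, S_INR.
  assert (Hak : INR a <= INR k) by (apply le_INR; lia).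
  assert (Hkb : INR k <= INR b) by (apply le_INR; lia).
  pose proof (INR_b2n_bounds hi). rewrite INR_chain_end in Hkb. unfold span in Hspan.
  assert ((2 * INR k + 1 - INR a) * th <= (span - 1) * th)
    by (apply Rmult_le_compat_r; unfold span; lra).
  assert (0 < 2 * INR k + 1 - INR a) by (pose proof (pos_INR k); lra).
  unfold span in *. apply sin_gt_0; nra.
Qed.

Lemma wave_nonneg_chain th k : 0 < th -> th * span <= 2 * PI -> (1 <= k <= b)%nat ->
  0 <= wave th (phase th) k.
Proof.
  intros Hth Hspan Hk. unfold wave. rewrite wave_angle. apply sin_ge_0.
  - assert (H1 : 1 <= INR k) by (apply (le_INR 1); lia).
    pose proof (INR_b2n_bounds lo). nra.
  - assert (Hkb : INR k <= INR b) by (apply le_INR; lia).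
    pose proof (INR_b2n_bounds lo). pose proof (INR_b2n_bounds hi).
    rewrite INR_chain_end in Hkb.
    assert ((2 * INR k - 1 - INR a) * th <= (span - 1) * th)
      by (apply Rmult_le_compat_r; unfold span; lra).
    unfold span in *. nra.
Qed.

Lemma wave_start th : wave th (phase th) a = (if lo then 0 else -1) * wave th (phase th) (S a).
Proof.
  unfold wave. rewrite !wave_angle. destruct lo; simpl INR.
  - replace ((2 * 1 - 1 - 1) * th / 2) with 0 by lra. rewrite sin_0. ring.
  - replace ((2 * 0 - 1 - 0) * th / 2) with (- ((2 * 1 - 1 - 0) * th / 2)) by lra.
    rewrite sin_neg. ring.
Qed.

Lemma wave_end th : th * span = 2 * PI ->
  wave th (phase th) (S (S b)) = tail * wave th (phase th) (S b).
Proof.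
  intros Hspan. unfold wave, tail. rewrite !wave_angle, !S_INR, INR_chain_end.
  unfold span in Hspan. destruct hi; simpl INR in *.
  - replace ((2 * (INR m - 1 + 1 + 1) - 1 - INR a) * th / 2) with PI by lra.
    rewrite sin_PI. ring.
  - apply Rplus_eq_reg_r with (sin ((2 * (INR m - 0 + 1) - 1 - INR a) * th / 2)).
    rewrite form3. replace ((_ + _) / 2) with PI by lra. rewrite sin_PI. ring.
Qed.

Lemma wave_end_pos th : 0 < th -> th * span < 2 * PI ->
  tail * wave th (phase th) (S b) < wave th (phase th) (S (S b)).
Proof.
  intros Hth Hspan. pose proof span_gt_2 as Hs2.
  assert (Hpi : th < PI) by nra.
  unfold wave, tail. rewrite !wave_angle, !S_INR, INR_chain_end.
  unfold span in Hspan, Hs2. destruct hi; simpl INR in *.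
  - rewrite Rmult_0_l. apply sin_gt_0; nra.
  - set (P := (2 * (INR m - 0 + 1 + 1) - 1 - INR a) * th / 2).
    set (Q := (2 * (INR m - 0 + 1) - 1 - INR a) * th / 2).
    apply Rplus_lt_reg_r with (sin Q). rewrite form3.
    assert (0 < cos ((P - Q) / 2)) by (apply cos_gt_0; unfold P, Q; lra).
    assert (0 < sin ((P + Q) / 2)) by (apply sin_gt_0; unfold P, Q; nra).
    nra.
Qed.

Lemma chain_pos beta : chain m beta lo hi ->
  forall k, (a < k <= m)%nat -> ER_lt (Fin 0) (beta k).
Proof.
  intros [Hlo [Hmid _]]. induction k as [|k IH]; intros Hk; [lia|].
  destruct (Nat.lt_ge_cases a k) as [Hak|Hka].
  - apply ER_lt_trans with (beta k); [apply IH; lia | apply Hmid; lia].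
  - destruct lo; simpl in Hk, Hka.
    + replace k with 1%nat by lia. rewrite <- Hlo. apply Hmid; lia.
    + replace k with 0%nat by lia. exact Hlo.
Qed.

Lemma chain_finite beta : chain m beta lo hi ->
  forall k, (1 <= k <= b)%nat -> beta k = Fin (ER_real (beta k)).
Proof.
  intros [_ [Hmid Hhi]] k Hk. destruct (Nat.lt_ge_cases k m) as [Hkm|Hkm].
  - exact (ER_lt_finite _ _ (Hmid k ltac:(lia) Hkm)).
  - destruct hi; simpl in Hk; [lia|].
    replace k with m by lia. exact (ER_lt_finite _ _ Hhi).
Qed.

Lemma chain_last_PInf beta : chain m beta lo hi -> hi = true -> beta m = PInf.
Proof. intros [_ [_ Hhi]] ->. exact Hhi. Qed.

Lemma padded_finite beta : chain m beta lo hi ->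
  forall k, (k <= b)%nat -> padded m beta k = Fin (ER_real (padded m beta k)).
Proof.
  intros Hc k Hk. destruct k as [|k]; [reflexivity|].
  rewrite padded_inner by lia. exact (chain_finite beta Hc (S k) ltac:(lia)).
Qed.

Lemma padded_pos beta : chain m beta lo hi ->
  forall k, (a < k <= b)%nat -> 0 < ER_real (padded m beta k).
Proof.
  intros Hc k Hk. rewrite padded_inner by lia.
  pose proof (chain_pos beta Hc k ltac:(lia)) as Hpos.
  rewrite (chain_finite beta Hc k ltac:(lia)) in Hpos.
  apply ER_lt_Fin in Hpos. exact Hpos.
Qed.

Lemma padded_start beta : chain m beta lo hi ->
  ER_real (padded m beta a) = if lo then 0 else -1.
Proof.
  intros [Hlo _]. destruct lo; simpl.
  - rewrite padded_inner, Hlo by lia. reflexivity.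
  - reflexivity.
Qed.

Lemma padded_end beta : (hi = true -> beta m = PInf) ->
  ER_inv (padded m beta (S b)) = Fin tail.
Proof.
  intros Hhi. unfold tail. destruct hi; simpl Nat.b2n.
  - replace (S (m - 1)) with m by lia.
    rewrite padded_inner, Hhi by (reflexivity || lia). reflexivity.
  - rewrite Nat.sub_0_r. unfold padded. rewrite Nat.eqb_refl, Bool.orb_true_r.
    rewrite ER_inv_Fin by lra. f_equal. field.
Qed.

Lemma G_bounded beta c : chain m beta lo hi ->
  2 + 2 * cos (2 * PI / span) < c < 4 ->
  (forall i, (i <= m)%nat -> ER_le (Fin c) (G m beta i)) -> False.
Proof.
  intros Hc Hcr HG.
  destruct (exists_angle_of_cos _ c optimal_angle_bounds Hcr) as [th [Hth Hcos]].
  assert (Hspan : th * span < 2 * PI).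
  { rewrite <- optimal_angle_span. pose proof span_gt_2.
    apply Rmult_lt_compat_r; lra. }
  set (w := wave th (phase th)).
  set (x := fun j => ER_real (padded m beta j)).
  assert (Hstep : forall k, (a <= k < b)%nat -> c - 2 <= x k + / x (S k) /\ 0 < x (S k)).
  { intros k Hk. assert (Hx := padded_pos beta Hc (S k) ltac:(lia)).
    split; [|exact Hx].
    assert (HGk := HG k ltac:(lia)).
    rewrite G_padded, (padded_finite beta Hc k), (padded_finite beta Hc (S k)) in HGk
      by lia.
    rewrite ER_inv_Fin in HGk by (unfold x in Hx; lra).
    cbn [ER_add ER_le] in HGk. unfold x. lra. }
  assert (Hlast : c - 2 <= x b + tail).
  { assert (HGb := HG b ltac:(lia)).
    rewrite G_padded, (padded_finite beta Hc b), padded_end in HGb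
      by (lia || exact (chain_last_PInf beta Hc)).
    cbn [ER_add ER_le] in HGb. unfold x. lra. }
  assert (Hbound : w (S (S b)) <= tail * w (S b)).
  { apply (riccati_bound (c - 2) tail w x a b); [lia | | | | exact Hstep | exact Hlast].
    - intros k. unfold w. rewrite wave_rec, Hcos. reflexivity.
    - intros k Hk. apply wave_pos_chain; lra || lia.
    - unfold w, x. rewrite wave_start, padded_start by exact Hc. lra. }
  pose proof (wave_end_pos th ltac:(lra) Hspan). unfold w in Hbound. lra.
Qed.

Lemma index_cases k : (k <= m)%nat -> (k <= b)%nat \/ (hi = true /\ k = m).
Proof.
  intros Hk. destruct hi; simpl; [|left; lia].
  destruct (Nat.eq_dec k m); [right; auto | left; lia].
Qed.

Local Notation T := (2 * PI / span).
Local Notation w := (wave T (phase T)).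

Lemma wave_pos_optimal k : (a <= k <= b)%nat -> 0 < w (S k).
Proof.
  intros Hk. pose proof optimal_angle_bounds. pose proof optimal_angle_span.
  apply wave_pos_chain; lra || lia.
Qed.

(* Every [G i] of this chain is [2 + 2 cos T] or [+oo]. *)
Definition extremal (j : nat) : ER :=
  if andb hi (j =? m) then PInf else Fin (w j / w (S j)).

Lemma extremal_inner k : (k <= b)%nat -> extremal k = Fin (w k / w (S k)).
Proof.
  intros Hk. unfold extremal.
  replace (andb hi (k =? m)) with false; [reflexivity|].
  destruct hi; simpl in *; [symmetry; apply Nat.eqb_neq; lia | reflexivity].
Qed.

Lemma extremal_last : hi = true -> extremal m = PInf.
Proof. intros Hhi. unfold extremal. rewrite Hhi, Nat.eqb_refl. reflexivity. Qed.

Lemma extremal_lt k : (1 <= k < m)%nat -> ER_lt (extremal k) (extremal (S k)).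
Proof.
  intros Hk. pose proof optimal_angle_bounds. pose proof optimal_angle_span.
  rewrite extremal_inner by (destruct hi; simpl; lia).
  destruct (index_cases (S k) ltac:(lia)) as [Hkb | [Hhi Hkm]].
  - rewrite extremal_inner by exact Hkb. apply ER_lt_Fin, wave_ratio_lt.
    + lra.
    + apply wave_nonneg_chain; lra || lia.
    + apply wave_pos_optimal; destruct lo; simpl; lia.
    + apply wave_pos_optimal; destruct lo; simpl; lia.
  - rewrite Hkm, extremal_last by exact Hhi. apply ER_lt_Fin_PInf.
Qed.

Lemma extremal_first : if lo then extremal 1 = Fin 0 else ER_lt (Fin 0) (extremal 1).
Proof.
  pose proof (wave_start T) as Hstart.
  pose proof (wave_pos_optimal 0) as Hw1. pose proof (wave_pos_optimal 1) as Hw2.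
  pose proof (extremal_inner 1) as Hinner. pose proof (index_cases 1 Hm) as Hcases.
  pose proof extremal_last as Hlast.
  destruct lo; simpl in *.
  - rewrite Hinner, Hstart by lia. f_equal. field. apply Rgt_not_eq, Hw2. lia.
  - destruct Hcases as [H1b | [Hhi H1m]].
    + rewrite Hinner by exact H1b.
      apply ER_lt_Fin, Rdiv_lt_0_compat; [apply Hw1 | apply Hw2]; lia.
    + rewrite H1m, Hlast by exact Hhi. apply ER_lt_Fin_PInf.
Qed.

Lemma extremal_chain : chain m extremal lo hi.
Proof.
  split; [exact extremal_first | split].
  - intros i Hi1 Him. apply extremal_lt. lia.
  - destruct (index_cases m (le_n m)) as [Hmb | [Hhi _]].
    + assert (Ehi : hi = false) by (destruct hi; simpl in Hmb; [lia | reflexivity]).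
      rewrite Ehi, extremal_inner by (rewrite Ehi; simpl; lia). apply ER_lt_Fin_PInf.
    + rewrite Hhi. exact (extremal_last Hhi).
Qed.

Lemma padded_extremal i : (a <= i <= b)%nat ->
  padded m extremal i = Fin (w i / w (S i)).
Proof.
  intros Hi. destruct i as [|i].
  - pose proof (wave_start T) as Hstart. pose proof (wave_pos_optimal 0) as Hw1.
    destruct lo; simpl in Hi, Hstart, Hw1; [lia|].
    unfold padded; simpl. rewrite Hstart. f_equal. field.
    apply Rgt_not_eq, Hw1. lia.
  - rewrite padded_inner by lia. apply extremal_inner. lia.
Qed.

Lemma padded_extremal_inv i : (a <= i <= b)%nat ->
  ER_inv (padded m extremal (S i)) = Fin (w (S (S i)) / w (S i)).
Proof.
  intros Hi. pose proof (wave_pos_optimal i Hi) as Hw1.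
  destruct (Nat.eq_dec i b) as [-> | Hib].
  - rewrite padded_end by exact extremal_last.
    rewrite wave_end by exact optimal_angle_span. f_equal. field. lra.
  - pose proof (wave_pos_optimal (S i) ltac:(lia)) as Hw2.
    rewrite padded_extremal, ER_inv_Fin by (lia || (apply Rgt_not_eq, Rdiv_lt_0_compat; lra)).
    f_equal. field. lra.
Qed.

Lemma extremal_G i : (i <= m)%nat -> ER_le (Fin (2 + 2 * cos T)) (G m extremal i).
Proof.
  intros Him. rewrite G_padded by lia.
  destruct (Nat.lt_ge_cases i a) as [Hia | Hai].
  - pose proof extremal_first as Hfirst.
    destruct lo; simpl in Hia, Hfirst; [|lia].
    replace i with 0%nat by lia. rewrite (padded_inner m extremal 1), Hfirst by lia.
    replace (ER_inv (Fin 0)) with PInf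
      by (unfold ER_inv; destruct (Req_EM_T 0 0); [reflexivity | lra]).
    destruct (ER_add (Fin 2) (padded m extremal 0)); exact I.
  - destruct (index_cases i Him) as [Hib | [Hhi Him']].
    + rewrite padded_extremal, padded_extremal_inv by lia.
      pose proof (wave_pos_optimal i ltac:(lia)). cbn [ER_add ER_le].
      rewrite (wave_rec T (phase T) i). right. field. lra.
    + subst i. rewrite padded_inner, extremal_last by (lia || exact Hhi). exact I.
Qed.

Theorem admissible_sup :
  ER_is_sup (admissible_values m lo hi) (Fin (2 + 2 * cos (2 * PI / span))).
Proof.
  apply admissible_is_sup.
  - pose proof optimal_angle_bounds. pose proof PI_RGT_0.
    assert (cos T < cos 0) by (apply cos_decreasing_1; lra).
    rewrite cos_0 in *. lra.
  - exact G_bounded.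
  - exists extremal. split; [exact extremal_chain | exact extremal_G].
Qed.

End Boundary.

Theorem proposition2 (m : nat) (hm : (1 <= m)%nat) :
  ER_is_sup (admissible_values m false false)
    (Fin (2 + 2 * cos (2 * PI / (2 * INR m + 2)))) /\
  ER_is_sup (admissible_values m false true)
    (Fin (2 + 2 * cos (2 * PI / (2 * INR m + 1)))) /\
  ER_is_sup (admissible_values m true false)
    (Fin (2 + 2 * cos (2 * PI / (2 * INR m + 1)))) /\
  ((2 <= m)%nat ->
   ER_is_sup (admissible_values m true true)
     (Fin (2 + 2 * cos (2 * PI / (2 * INR m))))).
Proof.
  assert (Hsup : forall lo hi L, L = span m lo hi -> (Nat.b2n lo + Nat.b2n hi <= m)%nat ->
            ER_is_sup (admissible_values m lo hi) (Fin (2 + 2 * cos (2 * PI / L)))).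
  { intros lo hi L -> Hlohi. exact (admissible_sup m lo hi hm Hlohi). }
  split; [|split; [|split]]; [| | | intros hm2];
    apply Hsup; solve [unfold span; simpl INR; ring | simpl; lia].
Qed.
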